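(* For every $n\geq1$, there is a surjective morphism $\phi:Z_{\mathbb{A}_{n+1}}\to Z_{\mathbb{A}_n}$ all of whose fibers are isomorphic to $\mathbb{A}^1$. For every $n\geq1$, $Z_{\mathbb{A}_n}\simeq\mathbb{A}^{n+1}$.
   Context: Over a field $\mathbb{K}$, for $n\ge1$, $Z_{\mathbb{A}_n}$ is the affine variety in variables $(\alpha,x_1,\dots,x_n,x'_1,\dots,x'_n)$ ($\alpha$ arbitrary) defined by $x_1x'_1=1+\alpha x_2$, $x_ix'_i=1+x_{i-1}x_{i+1}$ for $2\le i\le n-1$, $x_nx'_n=1+x_{n-1}$ (for $n=1$: $x_1x'_1=1+\alpha$). *)

From HB Require Import structures.
From mathcomp Require Import all_boot all_order all_algebra.
From mathcomp Require Import mpoly.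

Set Implicit Arguments.
Unset Strict Implicit.
Unset Printing Implicit Defensive.

Import GRing.Theory.
Local Open Scope ring_scope.

(* An affine K-variety is presented as (m, s): the closed subvariety of
   A^m cut out by the ideal generated by the finite list s of polynomials
   in K[X_0, ..., X_(m-1)]; its coordinate ring is K[X]/(s). *)

Section AffinePresented.
Variable K : fieldType.

Definition psubst (m k : nat) (f : 'I_k -> {mpoly K[m]}) (p : {mpoly K[k]})
  : {mpoly K[m]} := p \mPo [tuple f i | i < k].

Definition in_ideal (m : nat) (s : seq {mpoly K[m]}) (p : {mpoly K[m]}) : Prop :=
  exists c : 'I_(size s) -> {mpoly K[m]}, p = \sum_(i < size s) c i * s`_i.

Definition is_morph (m k : nat) (s : seq {mpoly K[m]}) (t : seq {mpoly K[k]})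
  (f : 'I_k -> {mpoly K[m]}) : Prop :=
  forall q, q \in t -> in_ideal s (psubst f q).

Definition pcomp (m k l : nat) (g : 'I_l -> {mpoly K[k]}) (f : 'I_k -> {mpoly K[m]})
  : 'I_l -> {mpoly K[m]} := fun j => psubst f (g j).

Definition idmap_p (m : nat) : 'I_m -> {mpoly K[m]} := fun i => 'X_i.

Definition equiv_mod (m k : nat) (s : seq {mpoly K[m]}) (f g : 'I_k -> {mpoly K[m]})
  : Prop := forall j, in_ideal s (f j - g j).

Definition isomorphic (m k : nat) (s : seq {mpoly K[m]}) (t : seq {mpoly K[k]})
  : Prop :=
  exists (f : 'I_k -> {mpoly K[m]}) (g : 'I_m -> {mpoly K[k]}),
    [/\ is_morph s t f, is_morph t s g,
        equiv_mod s (pcomp g f) (@idmap_p m) & equiv_mod t (pcomp f g) (@idmap_p k)].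

Definition affine_space (d : nat) : seq {mpoly K[d]} := [::].

Definition is_point (m : nat) (s : seq {mpoly K[m]}) (v : 'I_m -> K) : Prop :=
  forall q, q \in s -> q.@[v] = 0.

Definition surj_points (m k : nat) (s : seq {mpoly K[m]}) (t : seq {mpoly K[k]})
  (f : 'I_k -> {mpoly K[m]}) : Prop :=
  forall w, is_point t w ->
    exists v, is_point s v /\ forall j, (f j).@[v] = w j.

(* scheme-theoretic fibre of f : V(s) -> A^k over the K-point w *)
Definition fiber (m k : nat) (s : seq {mpoly K[m]}) (f : 'I_k -> {mpoly K[m]})
  (w : 'I_k -> K) : seq {mpoly K[m]} :=
  s ++ [seq f j - (w j)%:MP | j <- enum 'I_k].

(* Z_{A_n} in A^(2n+1), variables (alpha, x_1..x_n, x'_1..x'_n):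
   alpha = X_0, x_i = X_i (1 <= i <= n), x'_i = X_(n+i).
   With the conventions x_0 := alpha and x_(n+1) := 1 all the defining
   equations read  x_i x'_i = 1 + x_(i-1) x_(i+1)  for 1 <= i <= n. *)
Definition xv (n i : nat) : {mpoly K[n.*2.+1]} :=
  if (i <= n)%N then 'X_(inord i) else 1.
Definition xpv (n i : nat) : {mpoly K[n.*2.+1]} := 'X_(inord (n + i)).

Definition ZA (n : nat) : seq {mpoly K[n.*2.+1]} :=
  [seq xv n i * xpv n i - (1 + xv n i.-1 * xv n i.+1) | i <- iota 1 n].

End AffinePresented.

(** For n >= 1 the substitution
      x_0 = t y_0 - y'_1,  x'_1 = t y_1 - y_2,  x_(i+1) = y_i,  x'_(i+1) = y'_i
    identifies Z_(A_n) x A^1 (coordinates y, y', t) with Z_(A_(n+1)): modulo the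
    relations x_1 x'_1 = 1 + x_0 x_2 and x_2 x'_2 = 1 + x_1 x_3 one has
    x_0 = t x_1 - x'_2 and x'_1 = t x_2 - x_3 for t := x'_1 x'_2 - x_0 x_3, which
    gives the inverse. The morphism phi forgets t; as the projection of a trivial
    line bundle it is surjective with fibres A^1. Starting from Z_(A_1) ~ A^2,
    (alpha, x_1, x'_1) |-> (x_1, x'_1), these isomorphisms give Z_(A_n) ~ A^(n+1). *)
From Pilot Require Import Defs.
From HB Require Import structures.
From mathcomp Require Import all_boot all_order all_algebra.
From mathcomp Require Import mpoly.
From mathcomp Require Import ring zify.

Set Implicit Arguments.
Unset Strict Implicit.
Unset Printing Implicit Defensive.

Import GRing.Theory.
Local Open Scope ring_scope.

(* Shadows ssrfun's partial-function composition. *)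
Local Notation pcomp := Defs.pcomp.

Section Presentations.
Variable K : fieldType.

Lemma mpoly_ring_ind (m : nat) (P : {mpoly K[m]} -> Prop) :
  (forall c, P c%:MP) -> (forall i, P 'X_i) ->
  (forall p q, P p -> P q -> P (p + q)) -> (forall p q, P p -> P q -> P (p * q)) ->
  forall p, P p.
Proof.
move=> PC PX PD PM; elim/mpolyind => [|c mo p _ _ Pp]; first by rewrite -mpolyC0.
apply: (PD) => //; rewrite -mul_mpolyC; apply: (PM) => //.
rewrite mpolyXE_id; apply: (big_ind P); [by rewrite -mpolyC1 | exact: (PM) |].
move=> i _; elim: (mo i) => [|e IHe]; first by rewrite expr0 -mpolyC1.
by rewrite exprS; apply: PM.
Qed.

Section Substitution.
Variables (m k : nat) (f : 'I_k -> {mpoly K[m]}).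

Lemma psubstX i : psubst f 'X_i = f i.
Proof. by rewrite /psubst comp_mpolyXU -tnth_nth tnth_mktuple. Qed.
Lemma psubstC c : psubst f c%:MP = c%:MP.
Proof. by rewrite /psubst comp_mpolyC. Qed.
Lemma psubst1 : psubst f 1 = 1.
Proof. by rewrite /psubst comp_mpoly1. Qed.
Lemma psubstD p q : psubst f (p + q) = psubst f p + psubst f q.
Proof. by rewrite /psubst comp_mpolyD. Qed.
Lemma psubstB p q : psubst f (p - q) = psubst f p - psubst f q.
Proof. by rewrite /psubst comp_mpolyB. Qed.
Lemma psubstM p q : psubst f (p * q) = psubst f p * psubst f q.
Proof. by rewrite /psubst rmorphM. Qed.

Lemma meval_psubst v p : (psubst f p).@[v] = p.@[fun i => (f i).@[v]].
Proof. by rewrite comp_mpoly_meval; apply: meval_eq => i; rewrite tnth_mktuple. Qed.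

End Substitution.

Lemma eq_psubst m k (f g : 'I_k -> {mpoly K[m]}) p : f =1 g -> psubst f p = psubst g p.
Proof.
move=> efg; elim/mpoly_ring_ind: p => [c|i|p q hp hq|p q hp hq].
- by rewrite !psubstC.
- by rewrite !psubstX.
- by rewrite !psubstD hp hq.
- by rewrite !psubstM hp hq.
Qed.

Lemma psubst_comp m k l (f : 'I_k -> {mpoly K[m]}) (g : 'I_l -> {mpoly K[k]}) p :
  psubst f (psubst g p) = psubst (pcomp g f) p.
Proof.
elim/mpoly_ring_ind: p => [c|i|p q hp hq|p q hp hq].
- by rewrite !psubstC.
- by rewrite !psubstX.
- by rewrite !psubstD hp hq.
- by rewrite !psubstM hp hq.
Qed.

Lemma psubst_idmap m p : psubst (@idmap_p K m) p = p.
Proof. exact: comp_mpoly_id. Qed.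

Lemma psubst_const m k (w : 'I_k -> K) p :
  psubst (fun i => (w i)%:MP : {mpoly K[m]}) p = (p.@[w])%:MP.
Proof.
elim/mpoly_ring_ind: p => [c|i|p q hp hq|p q hp hq].
- by rewrite psubstC mevalC.
- by rewrite psubstX mevalXU.
- by rewrite psubstD !mevalD hp hq mpolyCD.
- by rewrite psubstM !mevalM hp hq mpolyCM.
Qed.

Section Ideal.
Variables (m : nat) (s : seq {mpoly K[m]}).

Lemma in_ideal0 : in_ideal s 0.
Proof. by exists (fun _ => 0); rewrite big1 // => i _; rewrite mul0r. Qed.

Lemma in_idealD p q : in_ideal s p -> in_ideal s q -> in_ideal s (p + q).
Proof.
case=> c -> [d ->]; exists (fun i => c i + d i).
by rewrite -big_split; apply: eq_bigr => i _; rewrite mulrDl.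
Qed.

Lemma in_idealMl r p : in_ideal s p -> in_ideal s (r * p).
Proof.
case=> c ->; exists (fun i => r * c i).
by rewrite mulr_sumr; apply: eq_bigr => i _; rewrite mulrA.
Qed.

Lemma in_idealMr r p : in_ideal s p -> in_ideal s (p * r).
Proof. by rewrite mulrC; apply: in_idealMl. Qed.

Lemma in_idealN p : in_ideal s p -> in_ideal s (- p).
Proof. by move=> sp; rewrite -mulN1r; apply: in_idealMl. Qed.

Lemma in_ideal_subr p q : p = q -> in_ideal s (p - q).
Proof. by move=> ->; rewrite subrr; apply: in_ideal0. Qed.

Lemma in_ideal_sum (I : finType) (F : I -> {mpoly K[m]}) :
  (forall i, in_ideal s (F i)) -> in_ideal s (\sum_i F i).
Proof. by move=> sF; apply: big_ind => //; [apply: in_ideal0 | apply: in_idealD]. Qed.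

Lemma mem_in_ideal q : q \in s -> in_ideal s q.
Proof.
move=> qs; have qi : (index q s < size s)%N by rewrite index_mem.
exists (fun i => (val i == index q s)%:R).
rewrite (bigD1 (Ordinal qi)) //= eqxx mul1r nth_index // big1 ?addr0 // => i.
by rewrite -val_eqE /= => /negbTE ->; rewrite mul0r.
Qed.

Lemma in_ideal_eval v p : in_ideal s p -> is_point s v -> p.@[v] = 0.
Proof.
case=> c -> sv; rewrite raddf_sum /= big1 // => i _.
by rewrite mevalM (sv s`_i) ?mulr0 // mem_nth.
Qed.

Lemma in_ideal_eval_eq v p q :
  in_ideal s (p - q) -> is_point s v -> p.@[v] = q.@[v].
Proof. by move=> spq sv; apply/eqP; rewrite -subr_eq0 -mevalB (in_ideal_eval spq sv). Qed.

End Ideal.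

Lemma in_ideal_subset m (s u : seq {mpoly K[m]}) p :
  {subset s <= u} -> in_ideal s p -> in_ideal u p.
Proof.
move=> su [c ->]; apply: in_ideal_sum => i; apply: in_idealMl.
by apply: mem_in_ideal; apply/su/mem_nth.
Qed.

Lemma in_ideal_nil m (p : {mpoly K[m]}) : in_ideal [::] p -> p = 0.
Proof. by case=> c ->; rewrite big_ord0. Qed.

Lemma in_ideal_psubst m k (s : seq {mpoly K[m]}) (t : seq {mpoly K[k]}) f p :
  is_morph s t f -> in_ideal t p -> in_ideal s (psubst f p).
Proof.
move=> mf [c ->]; rewrite /psubst raddf_sum /=; apply: in_ideal_sum => i.
by rewrite rmorphM /=; apply: in_idealMl; apply/mf/mem_nth.
Qed.

Lemma equiv_mod_psubst m k (s : seq {mpoly K[m]}) (f g : 'I_k -> {mpoly K[m]}) p :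
  equiv_mod s f g -> in_ideal s (psubst f p - psubst g p).
Proof.
move=> efg; elim/mpoly_ring_ind: p => [c|i|p q hp hq|p q hp hq].
- by rewrite !psubstC; apply: in_ideal_subr.
- by rewrite !psubstX; apply: efg.
- by rewrite !psubstD opprD addrACA; apply: in_idealD.
- rewrite !psubstM; set fp := psubst f p; set gq := psubst g q.
  have -> : fp * psubst f q - psubst g p * gq
    = fp * (psubst f q - gq) + (fp - psubst g p) * gq by ring.
  by apply: in_idealD; [apply: in_idealMl | apply: in_idealMr].
Qed.

Lemma is_morph_pcomp m k l (s : seq {mpoly K[m]}) (t : seq {mpoly K[k]})
    (u : seq {mpoly K[l]}) f g :
  is_morph s t f -> is_morph t u g -> is_morph s u (pcomp g f).
Proof. by move=> mf mg q qu; rewrite -psubst_comp; apply: in_ideal_psubst mf _; apply: mg. Qed.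

Lemma equiv_mod_pcomp m k l (s : seq {mpoly K[m]}) (t : seq {mpoly K[k]})
    (f1 : 'I_k -> {mpoly K[m]}) (g1 : 'I_m -> {mpoly K[k]})
    (f2 : 'I_l -> {mpoly K[k]}) (g2 : 'I_k -> {mpoly K[l]}) :
  is_morph s t f1 -> equiv_mod s (pcomp g1 f1) (@idmap_p K m) ->
  equiv_mod t (pcomp g2 f2) (@idmap_p K k) ->
  equiv_mod s (pcomp (pcomp g1 g2) (pcomp f2 f1)) (@idmap_p K m).
Proof.
move=> mf1 e1 e2 j; rewrite /pcomp -psubst_comp [psubst f2 _]psubst_comp /idmap_p.
rewrite -(subrK (psubst f1 (g1 j)) (psubst f1 _)) -addrA -psubstB.
apply: in_idealD; last exact: e1.
by apply: in_ideal_psubst mf1 _; rewrite -{2}(psubst_idmap (g1 j)); apply: equiv_mod_psubst.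
Qed.

Lemma isomorphic_trans m k l (s : seq {mpoly K[m]}) (t : seq {mpoly K[k]})
    (u : seq {mpoly K[l]}) :
  isomorphic s t -> isomorphic t u -> isomorphic s u.
Proof.
case=> f1 [g1 [mf1 mg1 e1 e1']] [f2 [g2 [mf2 mg2 e2 e2']]].
exists (pcomp f2 f1), (pcomp g1 g2); split.
- exact: is_morph_pcomp mf1 mf2.
- exact: is_morph_pcomp mg2 mg1.
- exact: equiv_mod_pcomp mf1 e1 e2.
- exact: equiv_mod_pcomp mg2 e2' e1'.
Qed.

(** * Products with the affine line *)

Definition extend_map (A : Type) k (h : 'I_k -> A) (a : A) : 'I_k.+1 -> A :=
  fun j => if unlift ord_max j is Some i then h i else a.

Lemma extend_map_lift A k h a i : @extend_map A k h a (lift ord_max i) = h i.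
Proof. by rewrite /extend_map liftK. Qed.

Lemma extend_map_max A k h a : @extend_map A k h a ord_max = a.
Proof. by rewrite /extend_map unlift_none. Qed.

Definition liftX m : 'I_m -> {mpoly K[m.+1]} := fun i => 'X_(lift ord_max i).

(* V(s) x A^1, the new coordinate being the last one. *)
Definition cylinder m (s : seq {mpoly K[m]}) : seq {mpoly K[m.+1]} :=
  map (psubst (@liftX m)) s.

Lemma psubst_liftX m k (h : 'I_k.+1 -> {mpoly K[m]}) p :
  psubst h (psubst (@liftX k) p) = psubst (fun i => h (lift ord_max i)) p.
Proof. by rewrite psubst_comp; apply: eq_psubst => i; rewrite /pcomp psubstX. Qed.

Lemma in_ideal_cylinder m (s : seq {mpoly K[m]}) p :
  in_ideal s p -> in_ideal (cylinder s) (psubst (@liftX m) p).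
Proof. by apply: in_ideal_psubst => q qs; apply/mem_in_ideal/map_f. Qed.

Section CylinderMap.
Variables (m k : nat) (s : seq {mpoly K[m]}) (t : seq {mpoly K[k]}).
Variables (f : 'I_k -> {mpoly K[m]}) (g : 'I_m -> {mpoly K[k]}).

Let F := extend_map (fun i => psubst (@liftX m) (f i)) 'X_ord_max.
Let G := extend_map (fun i => psubst (@liftX k) (g i)) 'X_ord_max.

Lemma psubst_cylinder_map p : psubst F (psubst (@liftX k) p) = psubst (@liftX m) (psubst f p).
Proof.
by rewrite psubst_liftX psubst_comp; apply: eq_psubst => i; rewrite /F extend_map_lift.
Qed.

Lemma is_morph_cylinder : is_morph s t f -> is_morph (cylinder s) (cylinder t) F.
Proof.
move=> mf q /mapP [q0 q0t ->]; rewrite psubst_cylinder_map.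
exact/in_ideal_cylinder/mf.
Qed.

Lemma equiv_mod_cylinder : equiv_mod s (pcomp g f) (@idmap_p K m) ->
  equiv_mod (cylinder s) (pcomp G F) (@idmap_p K m.+1).
Proof.
move=> e j; rewrite /pcomp /G; case: (unliftP ord_max j) => [i ->|->].
- have -> : @idmap_p K m.+1 (lift ord_max i) = psubst (@liftX m) 'X_i by rewrite psubstX.
  rewrite extend_map_lift psubst_cylinder_map -psubstB.
  exact/in_ideal_cylinder/e.
- by rewrite extend_map_max psubstX /F extend_map_max; apply: in_ideal_subr.
Qed.

End CylinderMap.

Lemma isomorphic_cylinder m k (s : seq {mpoly K[m]}) (t : seq {mpoly K[k]}) :
  isomorphic s t -> isomorphic (cylinder s) (cylinder t).
Proof.
case=> f [g [mf mg ef eg]].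
exists (extend_map (fun i => psubst (@liftX m) (f i)) 'X_ord_max).
exists (extend_map (fun i => psubst (@liftX k) (g i)) 'X_ord_max).
split; [exact: is_morph_cylinder | exact: is_morph_cylinder
       | exact: equiv_mod_cylinder | exact: equiv_mod_cylinder].
Qed.

(** * Projections of trivial line bundles *)

Section TrivialLineBundle.
Variables (m k : nat) (s : seq {mpoly K[m]}) (t : seq {mpoly K[k]}).
Variables (f : 'I_k.+1 -> {mpoly K[m]}) (g : 'I_m -> {mpoly K[k.+1]}).
Hypotheses (mf : is_morph s (cylinder t) f) (mg : is_morph (cylinder t) s g).
Hypotheses (ef : equiv_mod s (pcomp g f) (@idmap_p K m))
           (eg : equiv_mod (cylinder t) (pcomp f g) (@idmap_p K k.+1)).

Definition bundle_proj : 'I_k -> {mpoly K[m]} := fun j => f (lift ord_max j).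

Lemma is_morph_bundle_proj : is_morph s t bundle_proj.
Proof. by move=> q qt; rewrite -psubst_liftX; apply/mf/map_f. Qed.

Lemma surj_points_bundle_proj : surj_points s t bundle_proj.
Proof.
move=> w tw; pose u := extend_map w 0.
have tu : is_point (cylinder t) u.
  move=> q /mapP [q0 q0t ->]; rewrite meval_psubst -(tw q0 q0t).
  by apply: meval_eq => i; rewrite mevalXU /u extend_map_lift.
exists (fun i => (g i).@[u]); split.
- by move=> q qs; rewrite -meval_psubst; apply: in_ideal_eval tu; apply: mg.
- move=> j; rewrite -meval_psubst (in_ideal_eval_eq (eg (lift ord_max j)) tu).
  by rewrite mevalXU /u extend_map_lift.
Qed.

Section Fiber.
Variables (w : 'I_k -> K) (tw : is_point t w).

(* The inclusion A^1 -> V(t) x A^1, y |-> (w, y). *)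
Let incl := extend_map (fun i => (w i)%:MP : {mpoly K[1]}) 'X_ord0.

Let psubst_incl0 p : in_ideal (cylinder t) p -> psubst incl p = 0.
Proof.
move=> tp; apply/in_ideal_nil/(in_ideal_psubst _ tp) => _ /mapP [q0 q0t ->].
rewrite psubst_liftX (eq_psubst _ (extend_map_lift _ _)) psubst_const tw // mpolyC0.
exact: in_ideal0.
Qed.

Let psubst_incl_eq p q : in_ideal (cylinder t) (p - q) -> psubst incl p = psubst incl q.
Proof. by move=> /psubst_incl0 /eqP; rewrite psubstB subr_eq0 => /eqP. Qed.

Lemma isomorphic_bundle_fiber : isomorphic (fiber s bundle_proj w) (affine_space K 1).
Proof.
have sub_fiber : {subset s <= fiber s bundle_proj w} by move=> q qs; rewrite mem_cat qs.
exists (fun _ => f ord_max), (pcomp g incl); split.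
- by [].
- move=> q; rewrite -(psubst_comp incl g q) mem_cat => /orP [qs | /mapP [j _ ->]].
    by rewrite psubst_incl0; [apply: in_ideal0 | apply: mg].
  rewrite !psubstB !psubstC (psubst_incl_eq (eg _)) psubstX /incl extend_map_lift.
  by rewrite subrr; apply: in_ideal0.
- move=> j; rewrite /pcomp psubst_comp.
  rewrite -(subrK (psubst f (g j)) (psubst _ _)) -addrA.
  apply: in_idealD; last exact: in_ideal_subset sub_fiber (ef j).
  apply: equiv_mod_psubst => i; rewrite /pcomp /incl.
  case: (unliftP ord_max i) => [i' ->|->]; last first.
    by rewrite /extend_map unlift_none psubstX; apply: in_ideal_subr.
  rewrite extend_map_lift psubstC -opprB; apply/in_idealN/mem_in_ideal.
  by rewrite mem_cat; apply/orP; right; apply/map_f; rewrite mem_enum.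
- move=> j; rewrite ord1 /pcomp -psubst_comp (psubst_incl_eq (eg _)) /idmap_p psubstX.
  by rewrite /incl extend_map_max; apply: in_ideal_subr.
Qed.

End Fiber.
End TrivialLineBundle.

Lemma isomorphic_cylinder_fibration m k (s : seq {mpoly K[m]}) (t : seq {mpoly K[k]}) :
  isomorphic s (cylinder t) ->
  exists phi : 'I_k -> {mpoly K[m]},
    [/\ is_morph s t phi, surj_points s t phi &
        forall w, is_point t w -> isomorphic (fiber s phi w) (affine_space K 1)].
Proof.
case=> f [g [mf mg ef eg]]; exists (bundle_proj f); split.
- exact: is_morph_bundle_proj mf.
- exact: surj_points_bundle_proj mg eg.
- move=> w tw; exact: (isomorphic_bundle_fiber mg ef eg tw).
Qed.

(** * The varieties Z_(A_n) *)

Ltac decide_ifs := repeat (first [rewrite ifT; last by lia | rewrite ifF; last by lia]).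

Definition za_rel n i : {mpoly K[n.*2.+1]} :=
  xv K n i * xpv K n i - (1 + xv K n i.-1 * xv K n i.+1).

Lemma in_ideal_za_rel n i : (1 <= i <= n)%N -> in_ideal (ZA K n) (za_rel n i).
Proof. by move=> hi; apply/mem_in_ideal/mapP; exists i => //; rewrite mem_iota; lia. Qed.

Lemma is_morph_to_ZA m (s : seq {mpoly K[m]}) n f :
  (forall i, (1 <= i <= n)%N -> in_ideal s (psubst f (za_rel n i))) ->
  is_morph s (ZA K n) f.
Proof. by move=> hs q /mapP [i]; rewrite mem_iota => hi ->; apply: hs; lia. Qed.

Lemma psubst_za_rel m n (f : 'I_(n.*2.+1) -> {mpoly K[m]}) i :
  psubst f (za_rel n i) = psubst f (xv K n i) * psubst f (xpv K n i)
    - (1 + psubst f (xv K n i.-1) * psubst f (xv K n i.+1)).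
Proof. by rewrite psubstB psubstD psubst1 !psubstM. Qed.

Lemma val_lift_inord N i : (i < N.+1)%N -> lift ord_max (inord i : 'I_N.+1) = i :> nat.
Proof. by move=> hi; rewrite lift_max inordK. Qed.

Lemma lift_max_inord N (j : 'I_N.+2) : (j < N.+1)%N -> lift ord_max (inord j : 'I_N.+1) = j.
Proof. by move=> j_lt; apply/val_inj/val_lift_inord. Qed.

Section Step.
Variable n : nat.
Hypothesis n_gt0 : (0 < n)%N.

Definition za_t : {mpoly K[(n.+1).*2.+1]} :=
  xpv K n.+1 1 * xpv K n.+1 2 - xv K n.+1 0 * xv K n.+1 3.

Definition za_to_cyl : 'I_(n.*2.+1).+1 -> {mpoly K[(n.+1).*2.+1]} := fun j =>
  if (j <= n)%N then 'X_(inord j.+1)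
  else if (j < n.*2.+1)%N then 'X_(inord j.+2) else za_t.

Definition cyl_x i : {mpoly K[(n.*2.+1).+1]} := psubst (@liftX _) (xv K n i).
Definition cyl_x' i : {mpoly K[(n.*2.+1).+1]} := psubst (@liftX _) (xpv K n i).
Definition cyl_t : {mpoly K[(n.*2.+1).+1]} := 'X_ord_max.

Definition cyl_to_za : 'I_((n.+1).*2.+1) -> {mpoly K[(n.*2.+1).+1]} := fun j =>
  if (j == 0 :> nat) then cyl_t * cyl_x 0 - cyl_x' 1
  else if (j <= n.+1)%N then liftX (inord j.-1)
  else if (j == n.+2 :> nat) then cyl_t * cyl_x 1 - cyl_x 2
  else liftX (inord j.-2).

Lemma psubst_za_to_cyl_x i : (i <= n.+1)%N ->
  psubst (bundle_proj za_to_cyl) (xv K n i) = xv K n.+1 i.+1.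
Proof.
move=> hi; rewrite /xv; case: (leqP i n) => hin; last by rewrite psubst1 ifF //; lia.
rewrite psubstX /bundle_proj /za_to_cyl val_lift_inord; last lia.
by decide_ifs.
Qed.

Lemma psubst_za_to_cyl_x' i : (1 <= i <= n)%N ->
  psubst (bundle_proj za_to_cyl) (xpv K n i) = xpv K n.+1 i.+1.
Proof.
move=> hi; rewrite /xpv psubstX /bundle_proj /za_to_cyl val_lift_inord; last lia.
by decide_ifs; congr 'X_(inord _); lia.
Qed.

Lemma psubst_za_to_cyl_t : psubst za_to_cyl cyl_t = za_t.
Proof. by rewrite psubstX /za_to_cyl /= ifF ?ltnn //; lia. Qed.

Lemma cyl_xE i : (i <= n)%N -> cyl_x i = liftX (inord i).
Proof. by move=> hi; rewrite /cyl_x /xv hi psubstX. Qed.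

Lemma psubst_cyl_to_za_x i : (1 <= i <= n.+2)%N ->
  psubst cyl_to_za (xv K n.+1 i) = cyl_x i.-1.
Proof.
move=> hi; rewrite /xv; case: (leqP i n.+1) => hin.
- rewrite psubstX /cyl_to_za inordK; last lia.
  by decide_ifs; rewrite cyl_xE //; lia.
- by rewrite psubst1 /cyl_x /xv ifF ?psubst1 //; lia.
Qed.

Lemma psubst_cyl_to_za_x' i : (2 <= i <= n.+1)%N ->
  psubst cyl_to_za (xpv K n.+1 i) = cyl_x' i.-1.
Proof.
move=> hi; rewrite /xpv psubstX /cyl_to_za inordK; last lia.
by decide_ifs; rewrite /cyl_x' /xpv psubstX; congr (liftX (inord _)); lia.
Qed.

Lemma psubst_cyl_to_za_x0 : psubst cyl_to_za (xv K n.+1 0) = cyl_t * cyl_x 0 - cyl_x' 1.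
Proof. by rewrite /xv psubstX /cyl_to_za inordK. Qed.

Lemma psubst_cyl_to_za_x'1 : psubst cyl_to_za (xpv K n.+1 1) = cyl_t * cyl_x 1 - cyl_x 2.
Proof. by rewrite /xpv psubstX /cyl_to_za inordK; [decide_ifs | lia]. Qed.

Lemma is_morph_za_to_cyl : is_morph (ZA K n.+1) (cylinder (ZA K n)) za_to_cyl.
Proof.
move=> q /mapP [q0 /mapP [i]]; rewrite mem_iota => hi -> ->.
rewrite psubst_liftX -/(bundle_proj za_to_cyl) psubst_za_rel.
rewrite !psubst_za_to_cyl_x ?psubst_za_to_cyl_x' ?prednK; try lia.
by apply: in_ideal_za_rel; lia.
Qed.

Lemma psubst_cyl_to_za_rel i : (1 <= i <= n.+1)%N ->
  psubst cyl_to_za (za_rel n.+1 i) = psubst (@liftX _) (za_rel n (maxn 1 i.-1)).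
Proof.
move=> hi; rewrite !psubst_za_rel.
case: (ltnP 1 i) => hi1.
- rewrite !psubst_cyl_to_za_x ?psubst_cyl_to_za_x'; try lia.
  have -> : maxn 1 i.-1 = i.-1 by lia.
  by rewrite prednK //; lia.
- have -> : i = 1%N by lia.
  rewrite psubst_cyl_to_za_x0 psubst_cyl_to_za_x'1 !psubst_cyl_to_za_x //=; ring.
Qed.

Lemma is_morph_cyl_to_za : is_morph (cylinder (ZA K n)) (ZA K n.+1) cyl_to_za.
Proof.
apply: is_morph_to_ZA => i hi; rewrite psubst_cyl_to_za_rel //.
by apply/in_ideal_cylinder/in_ideal_za_rel; lia.
Qed.

Lemma za_t_x1E : za_t * xv K n.+1 1 - xpv K n.+1 2 - xv K n.+1 0
  = xpv K n.+1 2 * za_rel n.+1 1 + xv K n.+1 0 * za_rel n.+1 2.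
Proof. by rewrite /za_t /za_rel /=; ring. Qed.

Lemma za_t_x2E : za_t * xv K n.+1 2 - xv K n.+1 3 - xpv K n.+1 1
  = xpv K n.+1 1 * za_rel n.+1 2 + xv K n.+1 3 * za_rel n.+1 1.
Proof. by rewrite /za_t /za_rel /=; ring. Qed.

Lemma psubst_za_to_cyl_cyl_x i : (i <= n.+1)%N -> psubst za_to_cyl (cyl_x i) = xv K n.+1 i.+1.
Proof. by move=> hi; rewrite /cyl_x psubst_liftX psubst_za_to_cyl_x. Qed.

Lemma psubst_za_to_cyl_cyl_x' i : (1 <= i <= n)%N ->
  psubst za_to_cyl (cyl_x' i) = xpv K n.+1 i.+1.
Proof. by move=> hi; rewrite /cyl_x' psubst_liftX psubst_za_to_cyl_x'. Qed.

Lemma za_to_cylK : equiv_mod (ZA K n.+1) (pcomp cyl_to_za za_to_cyl) (@idmap_p K _).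
Proof.
have rel1 : in_ideal (ZA K n.+1) (za_rel n.+1 1) by apply: in_ideal_za_rel; lia.
have rel2 : in_ideal (ZA K n.+1) (za_rel n.+1 2) by apply: in_ideal_za_rel; lia.
move=> j; rewrite /pcomp /idmap_p -[j]inord_val /cyl_to_za inordK //.
case: (posnP j) => [j0|j_gt0].
- rewrite j0 /= psubstB psubstM psubst_za_to_cyl_t psubst_za_to_cyl_cyl_x'
    ?psubst_za_to_cyl_cyl_x //; try lia.
  by rewrite [X in _ - X](_ : _ = xv K n.+1 0) // za_t_x1E; apply: in_idealD; apply: in_idealMl.
case: (leqP j n.+1) => j_le.
- rewrite /liftX psubstX /za_to_cyl val_lift_inord; last lia.
  by decide_ifs; rewrite prednK //; apply: in_ideal_subr.
case: (eqVneq (j : nat) n.+2) => j_eq.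
- rewrite j_eq /= psubstB psubstM psubst_za_to_cyl_t !psubst_za_to_cyl_cyl_x //; try lia.
  rewrite [X in _ - X](_ : _ = xpv K n.+1 1); last by rewrite /xpv addn1.
  by rewrite za_t_x2E; apply: in_idealD; apply: in_idealMl.
have j_lt := ltn_ord j.
decide_ifs; rewrite /liftX psubstX /za_to_cyl val_lift_inord; last lia.
decide_ifs; have -> : j.-2.+2 = j by lia.
exact: in_ideal_subr.
Qed.

Lemma psubst_cyl_to_za_t :
  psubst cyl_to_za za_t = cyl_t + cyl_t * psubst (@liftX _) (za_rel n 1).
Proof.
rewrite /za_t psubstB !psubstM psubst_cyl_to_za_x0 psubst_cyl_to_za_x'1.
by rewrite psubst_cyl_to_za_x' ?psubst_cyl_to_za_x ?psubst_za_rel //=; try lia; ring.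
Qed.

Lemma cyl_to_zaK : equiv_mod (cylinder (ZA K n)) (pcomp za_to_cyl cyl_to_za) (@idmap_p K _).
Proof.
move=> j; rewrite /pcomp /idmap_p /za_to_cyl; have j_lt := ltn_ord j.
case: (ltnP j n.*2.+1) => j_max.
  case: (leqP j n) => j_le; decide_ifs;
    (rewrite psubstX /cyl_to_za inordK; last lia); decide_ifs;
    by rewrite /liftX /= lift_max_inord //; apply: in_ideal_subr.
have -> : j = ord_max by apply: val_inj => /=; lia.
rewrite ifF ?ifF /=; try lia.
rewrite psubst_cyl_to_za_t addrC addKr; apply: in_idealMl.
by apply/in_ideal_cylinder/in_ideal_za_rel; lia.
Qed.

Lemma isomorphic_ZA_cylinder : isomorphic (ZA K n.+1) (cylinder (ZA K n)).
Proof.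
exists za_to_cyl, cyl_to_za; split.
- exact: is_morph_za_to_cyl.
- exact: is_morph_cyl_to_za.
- exact: za_to_cylK.
- exact: cyl_to_zaK.
Qed.

End Step.

Lemma isomorphic_ZA1 : isomorphic (ZA K 1) (affine_space K 2).
Proof.
have rel1 : za_rel 1 1 = 'X_(inord 1) * 'X_(inord 2) - (1 + 'X_(inord 0) * 1) by [].
exists (fun j : 'I_2 => 'X_(inord j.+1)).
exists (fun j : 'I_(1.*2.+1) => if j == 0 :> nat then 'X_(inord 0) * 'X_(inord 1) - 1
                        else 'X_(inord j.-1)).
split.
- by [].
- apply: is_morph_to_ZA => i hi; have -> : i = 1%N by lia.
  rewrite rel1 psubstB psubstD psubst1 !psubstM psubst1 !psubstX !inordK //=.
  by apply: in_ideal_subr; ring.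
- move=> j; rewrite /pcomp /idmap_p /=; case: (posnP j) => [j0 | j_gt0].
  + rewrite psubstB psubstM psubst1 !psubstX !inordK //.
    have -> : j = inord 0 by apply: val_inj; rewrite /= inordK.
    have -> : 'X_(inord 1) * 'X_(inord 2) - 1 - 'X_(inord 0) = za_rel 1 1 by rewrite rel1; ring.
    exact: in_ideal_za_rel.
  + rewrite psubstX inordK; last by have := ltn_ord j; lia.
    by rewrite prednK // inord_val; apply: in_ideal_subr.
- move=> j; rewrite /pcomp /idmap_p psubstX inordK; last by have := ltn_ord j; lia.
  by rewrite /= inord_val; apply: in_ideal_subr.
Qed.

Lemma isomorphic_ZA_affine n : (0 < n)%N -> isomorphic (ZA K n) (affine_space K n.+1).
Proof.
elim: n => [//|n IHn] _; case: (posnP n) => [-> | n_gt0]; first exact: isomorphic_ZA1.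
exact: isomorphic_trans (isomorphic_ZA_cylinder n_gt0) (isomorphic_cylinder (IHn n_gt0)).
Qed.

End Presentations.

Theorem mainTheorem10 (K : fieldType) :
  (forall n : nat, (1 <= n)%N ->
     exists phi : 'I_(n.*2.+1) -> {mpoly K[(n.+1).*2.+1]},
       [/\ is_morph (ZA K n.+1) (ZA K n) phi,
           surj_points (ZA K n.+1) (ZA K n) phi &
           forall w : 'I_(n.*2.+1) -> K, is_point (ZA K n) w ->
             isomorphic (fiber (ZA K n.+1) phi w) (affine_space K 1)])
  /\
  (forall n : nat, (1 <= n)%N -> isomorphic (ZA K n) (affine_space K n.+1)).
Proof.
split; last exact: isomorphic_ZA_affine.
by move=> n n_gt0; apply/isomorphic_cylinder_fibration/isomorphic_ZA_cylinder.
Qed.
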